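(* In the setting described in the context, let $\lambda^*$ be an optimal solution of $\max_{\lambda\in\mathbb{R}^m}d(\lambda)$, and let $\{\lambda^k\}$ be generated by the IAL framework with a nonnegative sequence $\{\eta_k\}$ satisfying $\sum_{k=1}^{+\infty}\eta_k<+\infty$. Then $$\|\lambda^k-\lambda^*\|\le B:=\sqrt{\|\lambda^1-\lambda^*\|^2+2\beta\sum_{k=1}^{+\infty}\eta_k},\qquad k=1,2,\dots.$$
   Context: Let $A\in\mathbb{R}^{m\times n}$ and $b\in\mathbb{R}^m$. Let $f:\mathbb{R}^n\to\mathbb{R}$ be convex and differentiable with Lipschitz continuous gradient. Let $g:\mathbb{R}^n\to\mathbb{R}\cup\{+\infty\}$ be a closed proper convex (possibly nonsmooth) function with bounded domain. Fix a penalty parameter $\beta>0$. For $\lambda\in\mathbb{R}^m$, define $$\hat f_\beta(x;\lambda):=f(x)+\langle\lambda,Ax-b\rangle+\tfrac{\beta}{2}\|Ax-b\|^2,\qquad \mathcal{L}_\beta(x;\lambda):=\hat f_\beta(x;\lambda)+g(x),$$ and $d(\lambda):=\min_{x\in\mathbb{R}^n}\mathcal{L}_\beta(x;\lambda)$. Here $\nabla\hat f_\beta(x;\lambda)$ denotes the gradient of $\hat f_\beta$ with respect to $x$. IAL framework: choose $x^1\in\operatorname{dom} g$, $\lambda^1\in\mathbb{R}^m$, and a nonnegative sequence $\{\eta_k\}$. For $k=1,2,\dots$: find a point $x^{k+1}$ such that $$\max_{x\in\mathbb{R}^n}\Big\{\langle\nabla\hat f_\beta(x^{k+1};\lambda^k),\,x^{k+1}-x\rangle+g(x^{k+1})-g(x)\Big\}\le\eta_k,$$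 and then set $\lambda^{k+1}=\lambda^k+\beta(Ax^{k+1}-b)$. *)

From HB Require Import structures.
From mathcomp Require Import all_boot all_order all_algebra.
From mathcomp Require Import all_classical all_reals.
From mathcomp Require Import ereal sequences.
Set Implicit Arguments. Unset Strict Implicit. Unset Printing Implicit Defensive.
Import Order.TTheory GRing.Theory Num.Theory.
Local Open Scope ring_scope.

Section IAL.
Variable R : realType.

Definition dotv (n : nat) (u v : 'cV[R]_n) : R := \sum_(i < n) u i 0 * v i 0.
Definition enorm (n : nat) (v : 'cV[R]_n) : R := Num.sqrt (dotv v v).

Definition convex_fun (n : nat) (f : 'cV[R]_n -> R) : Prop :=
  forall x y (t : R), 0 <= t <= 1 ->
    f (t *: x + (1 - t) *: y) <= t * f x + (1 - t) * f y.

Definition is_gradient (n : nat) (f : 'cV[R]_n -> R) (G : 'cV[R]_n -> 'cV[R]_n)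
  : Prop :=
  forall x (e : R), 0 < e -> exists2 del : R, 0 < del &
    forall h, enorm h < del ->
      `| f (x + h) - f x - dotv (G x) h | <= e * enorm h.

Definition lipschitz_map (n : nat) (G : 'cV[R]_n -> 'cV[R]_n) : Prop :=
  exists L : R, forall x y, enorm (G x - G y) <= L * enorm (x - y).

Definition proper_fun (n : nat) (g : 'cV[R]_n -> \bar R) : Prop :=
  (forall x, g x != -oo%E) /\ (exists x, (g x < +oo)%E).

Definition convex_efun (n : nat) (g : 'cV[R]_n -> \bar R) : Prop :=
  forall x y (t : R), 0 <= t <= 1 ->
    (g (t *: x + (1 - t) *: y)%R <= t%:E * g x + (1 - t)%:E * g y)%E.

(* closed = lower semicontinuous *)
Definition closed_fun (n : nat) (g : 'cV[R]_n -> \bar R) : Prop :=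
  forall x (a : \bar R), (a < g x)%E -> exists2 del : R, 0 < del &
    forall y, enorm (y - x) < del -> (a < g y)%E.

Definition bounded_dom (n : nat) (g : 'cV[R]_n -> \bar R) : Prop :=
  exists M : R, forall x, (g x < +oo)%E -> enorm x <= M.

Variables (m n : nat) (A : 'M[R]_(m, n)) (b : 'cV[R]_m) (beta : R)
  (f : 'cV[R]_n -> R) (gradf : 'cV[R]_n -> 'cV[R]_n) (g : 'cV[R]_n -> \bar R).

Definition fhat (x : 'cV[R]_n) (l : 'cV[R]_m) : R :=
  f x + dotv l (A *m x - b) + beta / 2 * enorm (A *m x - b) ^+ 2.

Definition grad_fhat (x : 'cV[R]_n) (l : 'cV[R]_m) : 'cV[R]_n :=
  gradf x + A^T *m l + beta *: (A^T *m (A *m x - b)).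

Definition Lbeta (x : 'cV[R]_n) (l : 'cV[R]_m) : \bar R :=
  ((fhat x l)%:E + g x)%E.

(* d(lambda) = min_x L_beta(x; lambda), written as the infimum *)
Definition dual_fun (l : 'cV[R]_m) : \bar R :=
  ereal_inf [set Lbeta x l | x in [set: 'cV[R]_n]].

Definition ial_gap (x' : 'cV[R]_n) (l : 'cV[R]_m) : \bar R :=
  ereal_sup [set ((dotv (grad_fhat x' l) (x' - y))%:E + g x' - g y)%E
            | y in [set: 'cV[R]_n]].

End IAL.

From HB Require Import structures.
From mathcomp Require Import all_boot all_order all_algebra.
From mathcomp Require Import all_classical all_reals.
From mathcomp Require Import ereal sequences.
From mathcomp Require Import ring lra.

Set Implicit Arguments.
Unset Strict Implicit.
Unset Printing Implicit Defensive.
Import Order.TTheory GRing.Theory Num.Theory.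
Local Open Scope ring_scope.

(* Write [r = A x^{k+1} - b] for the residual, so that [lam^{k+1} = lam^k + beta r].
   Testing the [eta_k]-optimality of [x^{k+1}] against an arbitrary [y], and using
   the gradient inequality for [f], gives
   [d(lam^{k+1}) >= f(x^{k+1}) + g(x^{k+1}) + <lam^{k+1}, r> - eta_k].
   On the other hand [d(lam^* ) <= L_beta(x^{k+1}; lam^* )], and [lam^*] maximizes [d];
   comparing the two bounds yields [<lam^k - lam^*, r> + beta/2 |r|^2 <= eta_k], i.e.
   [|lam^{k+1} - lam^*|^2 <= |lam^k - lam^*|^2 + 2 beta eta_k].
   Summing these increments gives the bound. *)

Section InnerProduct.
Variable R : realType.

Lemma dotvC {k} (u v : 'cV[R]_k) : dotv u v = dotv v u.
Proof. by apply: eq_bigr => i _; rewrite mulrC. Qed.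

Lemma dotvDl {k} (u w v : 'cV[R]_k) : dotv (u + w) v = dotv u v + dotv w v.
Proof. by rewrite /dotv -big_split; apply: eq_bigr => i _; rewrite !mxE mulrDl. Qed.

Lemma dotvNl {k} (u v : 'cV[R]_k) : dotv (- u) v = - dotv u v.
Proof. by rewrite /dotv -sumrN; apply: eq_bigr => i _; rewrite !mxE mulNr. Qed.

Lemma dotvZl {k} a (u v : 'cV[R]_k) : dotv (a *: u) v = a * dotv u v.
Proof. by rewrite /dotv mulr_sumr; apply: eq_bigr => i _; rewrite !mxE mulrA. Qed.

Lemma dotvBl {k} (u w v : 'cV[R]_k) : dotv (u - w) v = dotv u v - dotv w v.
Proof. by rewrite dotvDl dotvNl. Qed.

Lemma dotvDr {k} (u w v : 'cV[R]_k) : dotv v (u + w) = dotv v u + dotv v w.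
Proof. by rewrite dotvC dotvDl !(dotvC v). Qed.

Lemma dotvBr {k} (u w v : 'cV[R]_k) : dotv v (u - w) = dotv v u - dotv v w.
Proof. by rewrite dotvC dotvBl !(dotvC v). Qed.

Lemma dotvNr {k} (u v : 'cV[R]_k) : dotv v (- u) = - dotv v u.
Proof. by rewrite dotvC dotvNl dotvC. Qed.

Lemma dotvZr {k} a (u v : 'cV[R]_k) : dotv v (a *: u) = a * dotv v u.
Proof. by rewrite dotvC dotvZl dotvC. Qed.

Lemma dotv_trmx p q (M : 'M[R]_(p, q)) l v : dotv (M^T *m l) v = dotv l (M *m v).
Proof.
rewrite /dotv; under eq_bigr do rewrite !mxE big_distrl /=.
rewrite exchange_big; apply: eq_bigr => j _.
by rewrite !mxE big_distrr; apply: eq_bigr => i _; rewrite !mxE /=; ring.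
Qed.

Lemma dotv_ge0 {k} (v : 'cV[R]_k) : 0 <= dotv v v.
Proof. by apply: sumr_ge0 => i _; rewrite -expr2 sqr_ge0. Qed.

Lemma enorm_sqr {k} (v : 'cV[R]_k) : enorm v ^+ 2 = dotv v v.
Proof. by rewrite /enorm sqr_sqrtr // dotv_ge0. Qed.

Lemma enormZ {k} t (v : 'cV[R]_k) : 0 <= t -> enorm (t *: v) = t * enorm v.
Proof.
move=> t0; rewrite /enorm dotvZl dotvZr mulrA -expr2 sqrtrM ?sqr_ge0 //.
by rewrite sqrtr_sqr ger0_norm.
Qed.

End InnerProduct.

Section ConvexGradient.
Variables (R : realType) (n : nat) (f : 'cV[R]_n -> R) (G : 'cV[R]_n -> 'cV[R]_n).
Hypotheses (f_cvx : convex_fun f) (f_grad : is_gradient f G).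

(* The secant slope [(f (x + t d) - f x) / t] is at most [f y - f x] by convexity and
   tends to [<G x, d>] as [t -> 0+]; it suffices to take [t] small enough for an
   error [e * t]. *)
Lemma convex_gradient_le x y : f x + dotv (G x) (y - x) <= f y.
Proof.
set d := y - x; set D := enorm d.
suff /ler_addgt0Pr slope : forall e, 0 < e -> dotv (G x) d <= f y - f x + e by lra.
move=> e e0; have D0 : 0 <= D := sqrtr_ge0 _.
have D1 : 0 < D + 1 by rewrite ltr_wpDl.
have [del del0 hdel] := f_grad x (divr_gt0 e0 D1).
set t := Num.min 1 (del / (2 * (D + 1))).
have t0 : 0 < t by rewrite lt_min ltr01 divr_gt0 // mulr_gt0.
have t1 : t <= 1 by rewrite ge_min lexx.
have tdel : t * (2 * (D + 1)) <= del.
  by rewrite -ler_pdivlMr ?mulr_gt0 // ge_min lexx orbT.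
have small : enorm (t *: d) < del.
  rewrite (enormZ _ (ltW t0)) (lt_le_trans _ tdel) // ltr_pM2l // -/D; lra.
have := hdel _ small; rewrite (enormZ _ (ltW t0)) dotvZr ler_norml => /andP[err _].
have xtd : x + t *: d = t *: y + (1 - t) *: x.
  by apply/matrixP => i j; rewrite !mxE; ring.
rewrite xtd in err.
have secant : f (t *: y + (1 - t) *: x) <= t * f y + (1 - t) * f x.
  by apply: f_cvx; rewrite ltW.
have eD : e / (D + 1) * (t * D) <= t * e.
  by rewrite mulrCA ler_pM2l // mulrAC ler_pdivrMr //; nra.
suff : t * dotv (G x) d <= t * (f y - f x + e) by rewrite ler_pM2l.
move: err; rewrite -/D; lra.
Qed.

End ConvexGradient.

Section IALStep.
Variables (R : realType) (m n : nat) (A : 'M[R]_(m, n)) (b : 'cV[R]_m) (beta : R).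
Variables (f : 'cV[R]_n -> R) (gradf : 'cV[R]_n -> 'cV[R]_n) (g : 'cV[R]_n -> \bar R).
Hypotheses (f_cvx : convex_fun f) (f_grad : is_gradient f gradf).
Hypotheses (g_proper : proper_fun g) (beta_ge0 : 0 <= beta).

Local Notation res x := (A *m x - b).
Local Notation d := (dual_fun A b beta f g).
Local Notation gap := (ial_gap A b beta gradf g).

Lemma ial_gap_ge x' l y :
  ((dotv (grad_fhat A b beta gradf x' l) (x' - y))%:E + g x' - g y <= gap x' l)%E.
Proof. by apply: ereal_sup_ubound; exists y. Qed.

Lemma ial_gap_dom x' l eta y :
  (gap x' l <= eta%:E)%E -> (g y < +oo)%E -> (g x' < +oo)%E.
Proof.
move=> gapx' gy; rewrite ltey; apply/negP => /eqP gx'.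
have := le_trans (ial_gap_ge x' l y) gapx'; rewrite gx'.
by move: (g_proper.1 y) gy; case: (g y) => // c _ _; rewrite leNgt ltey.
Qed.

Lemma dual_fun_ge_ial_gap x' l eta c : g x' = c%:E -> (gap x' l <= eta%:E)%E ->
  ((f x' + c + dotv (l + beta *: res x') (res x') - eta)%:E
     <= d (l + beta *: res x'))%E.
Proof.
move=> gx' gapx'; apply: le_ereal_inf_tmp => _ [y _ <-]; rewrite /Lbeta /fhat.
have := le_trans (ial_gap_ge x' l y) gapx'; rewrite gx'.
move: (g_proper.1 y); case: (g y) => [gy _| _ _|//]; last by rewrite addey ?leey.
rewrite -!EFinD !lee_fin => gap_y.
have grad_ineq := convex_gradient_le f_cvx f_grad x' y.
have res_diff : A *m (x' - y) = res x' - res y by rewrite mulmxBr opprB addrA subrK.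
have := mulr_ge0 (divr_ge0 beta_ge0 (ler0n R 2)) (dotv_ge0 (res y)).
move: gap_y grad_ineq; rewrite /grad_fhat enorm_sqr.
move: (res x') (res y) res_diff => r s res_diff.
rewrite !dotvDl dotvZl !dotv_trmx res_diff !dotvBr !dotvZl; lra.
Qed.

Lemma ial_multiplier_step lstar x' l eta :
  (forall l', (d l' <= d lstar)%E) -> (g x' < +oo)%E -> (gap x' l <= eta%:E)%E ->
  enorm (l + beta *: res x' - lstar) ^+ 2 <= enorm (l - lstar) ^+ 2 + 2 * beta * eta.
Proof.
move=> lstar_max gx'_lt gapx'.
have [c gx'] : exists c, g x' = c%:E.
  by move: (g_proper.1 x') gx'_lt; case: (g x') => // c; exists c.
have d_lstar : (d lstar <= (f x' + c + dotv lstar (res x')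
                            + beta / 2 * dotv (res x') (res x'))%:E)%E.
  apply: ereal_inf_lbound; exists x' => //.
  by rewrite /Lbeta /fhat gx' enorm_sqr -EFinD; congr (_%:E); ring.
have := le_trans (dual_fun_ge_ial_gap gx' gapx') (le_trans (lstar_max _) d_lstar).
rewrite lee_fin !enorm_sqr; move: (res x') => r.
rewrite !(dotvDl, dotvNl, dotvDr, dotvNr, dotvZl, dotvZr).
rewrite (dotvC r l) (dotvC lstar r) (dotvC lstar l) => dual_cmp.
have descent : dotv l r - dotv r lstar + beta / 2 * dotv r r <= eta by lra.
have := ler_wpM2l beta_ge0 descent; lra.
Qed.

End IALStep.

Section Sums.
Variable R : realType.
Implicit Types (u a : nat -> R).

Lemma le_add_sum_increments u a :
  (forall k, (1 <= k)%N -> u k.+1 <= u k + a k) ->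
  forall k, (1 <= k)%N -> u k <= u 1%N + \sum_(1 <= j < k) a j.
Proof.
move=> incr; elim=> [//|[|k] IH] _; first by rewrite big_geq // addr0.
rewrite big_nat_recr //=; have := incr k.+1 isT; have := IH isT; lra.
Qed.

Lemma psum_le_nneseries a :
  (forall j, (1 <= j)%N -> 0 <= a j) -> (\sum_(1 <= j <oo) (a j)%:E < +oo)%E ->
  forall k, \sum_(1 <= j < k) a j <= fine (\sum_(1 <= j <oo) (a j)%:E)%E.
Proof.
move=> a_ge0 a_fin k.
have S_ge0 : (0 <= \sum_(1 <= j <oo) (a j)%:E)%E.
  by apply: nneseries_ge0 => j j1 _; rewrite lee_fin a_ge0.
rewrite -lee_fin fineK ?ge0_fin_numE // -sumEFin.
by apply: nneseries_lim_ge => j j1 _; rewrite lee_fin a_ge0.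
Qed.

End Sums.

Theorem lemma3 (R : realType) (m n : nat) (A : 'M[R]_(m, n)) (b : 'cV[R]_m)
  (f : 'cV[R]_n -> R) (gradf : 'cV[R]_n -> 'cV[R]_n) (g : 'cV[R]_n -> \bar R)
  (beta : R)
  (hf_cvx : convex_fun f) (hf_grad : is_gradient f gradf)
  (hf_lip : lipschitz_map gradf)
  (hg_proper : proper_fun g) (hg_cvx : convex_efun g) (hg_closed : closed_fun g)
  (hg_bdd : bounded_dom g)
  (hbeta : 0 < beta)
  (lstar : 'cV[R]_m)
  (hlstar : forall l, (dual_fun A b beta f g l <= dual_fun A b beta f g lstar)%E)
  (eta : nat -> R) (x : nat -> 'cV[R]_n) (lam : nat -> 'cV[R]_m)
  (heta_nn : forall k, (1 <= k)%N -> 0 <= eta k)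
  (heta_sum : (\sum_(1 <= k <oo) (eta k)%:E < +oo)%E)
  (hx1 : (g (x 1%N) < +oo)%E)
  (hx : forall k, (1 <= k)%N ->
          (ial_gap A b beta gradf g (x k.+1) (lam k) <= (eta k)%:E)%E)
  (hlam : forall k, (1 <= k)%N ->
          lam k.+1 = lam k + beta *: (A *m x k.+1 - b)) :
  forall k, (1 <= k)%N ->
    enorm (lam k - lstar) <=
    Num.sqrt (enorm (lam 1%N - lstar) ^+ 2
              + 2 * beta * fine (\sum_(1 <= k <oo) (eta k)%:E)%E).
Proof.
move=> k k1.
have step j : (1 <= j)%N -> enorm (lam j.+1 - lstar) ^+ 2
                            <= enorm (lam j - lstar) ^+ 2 + 2 * beta * eta j.
  move=> j1; rewrite hlam //.
  have x_dom := ial_gap_dom hg_proper (hx j j1) hx1.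
  exact: (ial_multiplier_step hf_cvx hf_grad hg_proper (ltW hbeta) hlstar x_dom (hx j j1)).
rewrite -[enorm _]ger0_norm ?sqrtr_ge0 // -sqrtr_sqr; apply: ler_wsqrtr.
apply: le_trans (le_add_sum_increments step k1) _.
by rewrite lerD2l -mulr_sumr ler_pM2l ?mulr_gt0 // psum_le_nneseries.
Qed.
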